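(* Let $(\varphi_k)_{k\ge0}$ be nonnegative weights with $\varphi_0>0$. Let $\mathcal M=\Psi\circ\Phi$ be the map (defined in the context) from increasing diamonds of size $n$ to ordered increasing bucket trees of size $n$ with bucket size $2$. Then for every increasing diamond $F$, the number of inner nodes of $F$ equals the number of nodes of capacity one in $\mathcal M(F)$. Consequently, if $I_n$ denotes the number of inner nodes of a random increasing diamond of size $n$ and $N_n$ the number of capacity-one nodes of a random ordered increasing bucket tree of size $n$ with bucket size 2 (both chosen with probability proportional to weight, with $\psi_1=1$), then $I_n$ and $N_n$ are equal in distribution for every $n\ge1$.
   Context: Increasing diamonds are defined recursively on a finite set $L$ of integer labels: if $|L|=1$ it is a single vertex with that label (weight 1); if $|L|\ge2$ it consists of a source vertex labelled $\min L$, a sink vertex labelled $\max L$, and an ordered sequence $(F_1,\dots,F_r)$, $r\ge0$, of increasing diamonds whose label sets partition $L\setminus\{\min L,\max L\}$, with weight $\varphi_r\prod_i w(F_i)$; size is $|L|$. Node types: if $|L|=1$ its unique vertex is an inner node; otherwise the source is a small node, the sink a large node, and the types of the vertices of $F_1,\dots,F_r$ are assigned recursively. Ordered increasing bucket trees with $b=2$: plane rooted trees whose nodes have capacity 1 or 2 (nodes with children have capacity 2), labels $1,\dots,n$ distributed with each node holding as many labels as its capacity and every label of a node smaller than the labels in its children; weight = product of $\varphi_{d^+(v)}$ over capacity-2 nodes ($d^+(v)$ = number of children), capacity-1 nodes have weight $\psi_1=1$. The map $\mathcal M$: First $\Phi$: if $F$ has one vertex, $\Phi(F)$ is a single bucket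 containing its label; otherwise $\Phi(F)$ has root bucket containing $\min L$ and $\max L$, with ordered subtrees $\Phi(F_1),\dots,\Phi(F_r)$. Then $\Psi$ applied to a bucket-labelled plane tree $\hat T$: if its size is 1, return it; otherwise let $\ell_1<\dots<\ell_n$ be its labels, relabel every label by the permutation fixing $\ell_1$ and mapping $\ell_2\mapsto\ell_3\mapsto\cdots\mapsto\ell_n\mapsto\ell_2$, then keep the root bucket and replace each root subtree $\hat T_i$ (in order) by $\Psi(\hat T_i)$. *)

From HB Require Import structures.
From mathcomp Require Import all_boot all_order all_algebra.
From mathcomp Require Import boolp classical_sets fsbigop.
Set Implicit Arguments. Unset Strict Implicit. Unset Printing Implicit Defensive.
Import Order.TTheory GRing.Theory Num.Theory.

(*   DLeaf a          : single vertex labelled a (an inner node)       *)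
(*   DNode s t [F_1..F_r] : source labelled s, sink labelled t, and    *)
(*                      the ordered sequence of sub-diamonds F_i.       *)
Inductive diamond := DLeaf of nat | DNode of nat & nat & seq diamond.

Fixpoint dlabels (F : diamond) : seq nat :=
  match F with
  | DLeaf a => [:: a]
  | DNode s t Fs => s :: t :: flatten (map dlabels Fs)
  end.

Fixpoint dwf (F : diamond) : bool :=
  match F with
  | DLeaf _ => true
  | DNode s t Fs =>
      [&& s < t,
          all (fun x => (s < x) && (x < t)) (flatten (map dlabels Fs))
        & all dwf Fs]
  end.

(* F is an increasing diamond (on the label set dlabels F):
   together with uniqueness of labels, the children's label sets
   partition L \ {min L, max L}, source = min L, sink = max L. *)
Definition is_diamond (F : diamond) : bool := uniq (dlabels F) && dwf F.

Fixpoint dweight {R : nzSemiRingType} (phi : nat -> R) (F : diamond) : R :=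
  match F with
  | DLeaf _ => 1%R
  | DNode _ _ Fs => (phi (size Fs) * \prod_(G <- map (dweight phi) Fs) G)%R
  end.

(* number of inner nodes: exactly the vertices of one-vertex sub-diamonds *)
Fixpoint dinner (F : diamond) : nat :=
  match F with
  | DLeaf _ => 1
  | DNode _ _ Fs => sumn (map dinner Fs)
  end.

(* Bucket-labelled plane trees: BNode b [T_1..T_r], b = bucket content *)
(* (its capacity is size b).                                           *)
Inductive btree := BNode of seq nat & seq btree.

Fixpoint blabels (T : btree) : seq nat :=
  match T with BNode b cs => b ++ flatten (map blabels cs) end.

Fixpoint bwf (T : btree) : bool :=
  match T with
  | BNode b cs =>
      [&& (size b == 1) || (size b == 2),
          (~~ nilp cs) ==> (size b == 2),
          sorted ltn b,
          all (fun x => all (fun y => x < y) (flatten (map blabels cs))) b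
        & all bwf cs]
  end.

(* ordered increasing bucket tree with b = 2 (on the label set blabels T);
   a bucket is a set of labels, represented canonically by its increasing list *)
Definition is_btree (T : btree) : bool := uniq (blabels T) && bwf T.

Fixpoint bweight {R : nzSemiRingType} (phi : nat -> R) (T : btree) : R :=
  match T with
  | BNode b cs =>
      ((if size b == 2 then phi (size cs) else 1)
        * \prod_(G <- map (bweight phi) cs) G)%R
  end.

Fixpoint bcap1 (T : btree) : nat :=
  match T with
  | BNode b cs => (size b == 1) + sumn (map bcap1 cs)
  end.

Fixpoint brelabel (f : nat -> nat) (T : btree) : btree :=
  match T with BNode b cs => BNode (map f b) (map (brelabel f) cs) end.

Fixpoint bheight (T : btree) : nat :=
  match T with BNode _ cs => (foldr maxn 0 (map bheight cs)).+1 end.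

(* For ls = [:: l1; l2; ...; ln] (sorted), the permutation fixing l1 and
   mapping l2 -> l3 -> ... -> ln -> l2 (identity off ls). *)
Definition cycperm (ls : seq nat) (x : nat) : nat :=
  match ls with
  | [::] => x
  | _ :: rest => if x \in rest then nth x (rot 1 rest) (index x rest) else x
  end.

Fixpoint Phi (F : diamond) : btree :=
  match F with
  | DLeaf a => BNode [:: a] [::]
  | DNode s t Fs => BNode [:: s; t] (map Phi Fs)
  end.

(* The map Psi, with fuel (bheight T fuel is always enough). *)
Fixpoint Psi_fuel (k : nat) (T : btree) : btree :=
  match k with
  | 0 => T
  | k'.+1 =>
      if size (blabels T) == 1 then T else
      match brelabel (cycperm (sort leq (blabels T))) T with
      | BNode b cs => BNode b (map (Psi_fuel k') cs)
      end
  end.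

Definition Psi (T : btree) : btree := Psi_fuel (bheight T) T.

Definition Mmap (F : diamond) : btree := Psi (Phi F).

Fixpoint denc (F : diamond) : GenTree.tree nat :=
  match F with
  | DLeaf a => GenTree.Leaf a
  | DNode s t Fs => GenTree.Node 0 (GenTree.Leaf s :: GenTree.Leaf t :: map denc Fs)
  end.

Fixpoint ddec (x : GenTree.tree nat) : diamond :=
  match x with
  | GenTree.Leaf a => DLeaf a
  | GenTree.Node _ (GenTree.Leaf s :: GenTree.Leaf t :: ts) => DNode s t (map ddec ts)
  | GenTree.Node _ _ => DLeaf 0
  end.

Fixpoint dencK (F : diamond) : ddec (denc F) = F :=
  match F return ddec (denc F) = F with
  | DLeaf a => erefl
  | DNode s t Fs =>
      f_equal (DNode s t)
        ((fix aux (l : seq diamond) : map ddec (map denc l) = l :=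
            match l return map ddec (map denc l) = l with
            | [::] => erefl
            | G :: l' => f_equal2 cons (dencK G) (aux l')
            end) Fs)
  end.

HB.instance Definition _ := Countable.copy diamond (can_type dencK).

Fixpoint benc (T : btree) : GenTree.tree (seq nat) :=
  match T with
  | BNode b cs => GenTree.Node 0 (GenTree.Leaf b :: map benc cs)
  end.

Fixpoint bdec (x : GenTree.tree (seq nat)) : btree :=
  match x with
  | GenTree.Node _ (GenTree.Leaf b :: ts) => BNode b (map bdec ts)
  | _ => BNode [::] [::]
  end.

Fixpoint bencK (T : btree) : bdec (benc T) = T :=
  match T return bdec (benc T) = T with
  | BNode b cs =>
      f_equal (BNode b)
        ((fix aux (l : seq btree) : map bdec (map benc l) = l :=
            match l return map bdec (map benc l) = l with
            | [::] => erefl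
            | G :: l' => f_equal2 cons (bencK G) (aux l')
            end) cs)
  end.

HB.instance Definition _ := Countable.copy btree (can_type bencK).

Local Open Scope classical_set_scope.
Local Open Scope ring_scope.

Definition diamonds_of_size (n : nat) : set diamond :=
  [set F | is_diamond F /\ perm_eq (dlabels F) (iota 1 n)].

Definition btrees_of_size (n : nat) : set btree :=
  [set T | is_btree T /\ perm_eq (blabels T) (iota 1 n)].

Definition prob_inner {R : realFieldType} (phi : nat -> R) (n k : nat) : R :=
  (\sum_(F \in diamonds_of_size n `&` [set F | dinner F = k]) dweight phi F)
  / (\sum_(F \in diamonds_of_size n) dweight phi F).

Definition prob_cap1 {R : realFieldType} (phi : nat -> R) (n k : nat) : R :=
  (\sum_(T \in btrees_of_size n `&` [set T | bcap1 T = k]) bweight phi T)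
  / (\sum_(T \in btrees_of_size n) bweight phi T).

(* Phi sends the one-vertex subdiamonds, i.e. the inner nodes, to the capacity-one buckets,
   and Psi only permutes labels, so M preserves the statistic.
   For the distributions it suffices to have a bijection between increasing diamonds and
   bucket trees on the same label set preserving weights and the statistic. Recursively,
   the diamond with source s, sink t and inner labels m_1 < ... < m_k goes to the tree with
   root bucket {s, m_1} whose subtrees are the images of the subdiamonds relabelled by the
   increasing shift m_i |-> m_(i+1), m_k |-> t; the inverse recovers the sink as the largest
   label below the root bucket and shifts back. Both maps commute with increasing
   relabellings, which is what makes them mutually inverse. *)

From mathcomp Require Import all_boot all_order all_algebra.
From mathcomp Require Import boolp classical_sets functions fsbigop.
Import Order.TTheory GRing.Theory Num.Theory.

Set Implicit Arguments.
Unset Strict Implicit.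
Unset Printing Implicit Defensive.

Lemma diamond_ind_in (P : diamond -> Prop) :
  (forall a, P (DLeaf a)) ->
  (forall s t Fs, (forall X, X \in Fs -> P X) -> P (DNode s t Fs)) ->
  forall F, P F.
Proof.
move=> Pleaf Pnode; fix IH 1 => -[a|s t Fs]; first exact: Pleaf.
(* [done] would close the empty case with the unguarded [IH]. *)
apply: Pnode; elim: Fs => [|Y Fs IHFs] X; first by rewrite in_nil => /notF[].
by rewrite inE => /predU1P[-> | /IHFs].
Qed.

Lemma btree_ind_in (P : btree -> Prop) :
  (forall b cs, (forall X, X \in cs -> P X) -> P (BNode b cs)) -> forall T, P T.
Proof.
move=> Pnode; fix IH 1 => -[b cs]; apply: Pnode.
elim: cs => [|Y cs IHcs] X; first by rewrite in_nil => /notF[].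
by rewrite inE => /predU1P[-> | /IHcs].
Qed.

Lemma mem_flatten_map (T U : eqType) (g : T -> seq U) l X x :
  X \in l -> x \in g X -> x \in flatten (map g l).
Proof. by move=> Xl xX; apply/flatten_mapP; exists X. Qed.

Lemma uniq_flatten_map_mem (T U : eqType) (g : T -> seq U) l X :
  uniq (flatten (map g l)) -> X \in l -> uniq (g X).
Proof.
elim: l => [|Y l IHl] //=; rewrite cat_uniq inE => /and3P[uY _ ul].
by case/predU1P => [-> // | Xl]; apply: IHl.
Qed.

Lemma perm_flatten_map (T U : eqType) (f g : T -> seq U) l :
  {in l, forall X, perm_eq (f X) (g X)} ->
  perm_eq (flatten (map f l)) (flatten (map g l)).
Proof.
elim: l => [|Y l IHl] //= fg; rewrite perm_cat ?fg ?mem_head ?IHl // => X Xl.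
by rewrite fg // inE Xl orbT.
Qed.

Lemma index_map_in (T U : eqType) (f : T -> U) A x :
  {in A &, injective f} -> x \in A -> index (f x) (map f A) = index x A.
Proof.
elim: A => [|y A IHA] //= f_inj; rewrite inE => /predU1P[->|xA]; first by rewrite !eqxx.
have [->|yx] := eqVneq y x; first by rewrite eqxx.
have -> : (f y == f x) = false.
  by apply/eqP => /f_inj; rewrite !inE eqxx xA orbT => /(_ isT isT) /eqP; rewrite (negbTE yx).
by rewrite IHA // => u v uA vA; apply: f_inj; rewrite inE ?uA ?vA orbT.
Qed.

Lemma sort_ltn_sorted (s : seq nat) : uniq s -> sorted ltn (sort leq s).
Proof. by move=> us; rewrite ltn_sorted_uniq_leq sort_uniq us (sort_sorted leq_total). Qed.

Lemma sort_leq_id (s l : seq nat) : sorted ltn l -> perm_eq s l -> sort leq s = l.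
Proof.
move=> sl /(perm_sortP leq_total leq_trans anti_leq) ->.
by apply: (sorted_sort leq_trans); move: sl; rewrite ltn_sorted_uniq_leq => /andP[].
Qed.

Lemma sort_map_homo_ltn (f : nat -> nat) (l s : seq nat) :
  {in l &, {homo f : x y / x < y}} -> {subset s <= l} ->
  sort leq (map f s) = map f (sort leq s).
Proof.
move=> /leq_mono_in f_mono sl; apply: (homo_sort_map_in (P := mem l)).
- by move=> x y xl yl /=; rewrite !f_mono // => /anti_leq.
- by move=> y x z xl yl zl /=; rewrite !f_mono //; apply: leq_trans.
- by move=> x y _ _; apply: leq_total.
- by move=> x y xl yl; rewrite f_mono.
- exact/allP.
Qed.

Lemma rcons_sorted (T : eqType) (e : rel T) (s : seq T) t :
  sorted e s -> all (e^~ t) s -> sorted e (rcons s t).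
Proof.
case: s => // x s ss /allP st; rewrite /= rcons_path -/(sorted e (x :: s)) ss.
by apply: st; apply: mem_last.
Qed.

Lemma rcons_head_behead (T : Type) (s : seq T) t :
  rcons s t = head t s :: behead (rcons s t).
Proof. by case: s. Qed.

Lemma belast_last_behead (T : Type) (s : seq T) t :
  belast (head t s) (behead (rcons s t)) = s /\ last (head t s) (behead (rcons s t)) = t.
Proof. by case: s => //= x s; rewrite belast_rcons last_rcons. Qed.

Lemma head_behead_belast (T : Type) (x : T) s :
  head (last x s) (belast x s) = x /\ behead (rcons (belast x s) (last x s)) = s.
Proof. by rewrite -lastI; case: s. Qed.

Section Transfer.

Variable T : eqType.
Implicit Types A B l : seq T.

Definition transfer A B (x : T) : T := nth x B (index x A).

Lemma transfer_nth A B x0 i : size A = size B -> uniq A -> i < size A ->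
  transfer A B (nth x0 A i) = nth x0 B i.
Proof.
by move=> sAB uA iA; rewrite /transfer index_uniq // (set_nth_default x0) // -sAB.
Qed.

Lemma mem_transfer A B x : size A = size B -> x \in A -> transfer A B x \in B.
Proof. by move=> sAB xA; rewrite /transfer mem_nth // -sAB index_mem. Qed.

Lemma map_transfer A B : size A = size B -> uniq A -> map (transfer A B) A = B.
Proof.
move=> sAB uA; case: A => [|x0 A'] in sAB uA *; first by case: B sAB.
apply: (@eq_from_nth _ x0); rewrite size_map // => i iA.
by rewrite (nth_map x0) // transfer_nth.
Qed.

Lemma perm_map_transfer A B l : size A = size B -> uniq A -> perm_eq l A ->
  perm_eq (map (transfer A B) l) B.
Proof.
by move=> sAB uA lA; rewrite -[X in perm_eq _ X](map_transfer sAB uA); apply: perm_map.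
Qed.

Lemma transferK A B : size A = size B -> uniq A -> uniq B ->
  {in A, cancel (transfer A B) (transfer B A)}.
Proof.
move=> sAB uA uB x xA; have iA : index x A < size A by rewrite index_mem.
by rewrite -(nth_index x xA) !transfer_nth // -sAB.
Qed.

End Transfer.

Lemma transfer_map (T U : eqType) (f : T -> U) (A B : seq T) x :
  {in A &, injective f} -> size A = size B -> x \in A ->
  transfer (map f A) (map f B) (f x) = f (transfer A B x).
Proof.
by move=> f_inj sAB xA; rewrite /transfer index_map_in // (nth_map x) // -sAB index_mem.
Qed.

Lemma transfer_homo (A B : seq nat) : size A = size B -> sorted ltn A -> sorted ltn B ->
  {in A &, {homo transfer A B : x y / x < y}}.
Proof.
move=> sAB sA sB x y xA yA xy; have uA := sorted_uniq ltn_trans ltnn sA.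
have lt_idx : index x A < index y A.
  move: xy; rewrite -{1}(nth_index 0 xA) -{1}(nth_index 0 yA) !ltnNge.
  by rewrite (leq_mono_in (sorted_ltn_nth ltn_trans 0 sA)) ?inE ?index_mem.
rewrite -(nth_index 0 xA) -(nth_index 0 yA) !transfer_nth ?index_mem //.
by apply: (sorted_ltn_nth ltn_trans 0 sB); rewrite ?inE -?sAB ?index_mem.
Qed.

Fixpoint drelabel (f : nat -> nat) (F : diamond) : diamond :=
  match F with
  | DLeaf a => DLeaf (f a)
  | DNode s t Fs => DNode (f s) (f t) (map (drelabel f) Fs)
  end.

Lemma dlabels_drelabel f F : dlabels (drelabel f F) = map f (dlabels F).
Proof.
elim/diamond_ind_in: F => // s t Fs IH /=; rewrite map_flatten -!map_comp.
by congr [:: _, _ & flatten _]; apply/eq_in_map => X /IH.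
Qed.

Lemma blabels_brelabel f T : blabels (brelabel f T) = map f (blabels T).
Proof.
elim/btree_ind_in: T => b cs IH /=; rewrite map_cat map_flatten -!map_comp.
by congr (_ ++ flatten _); apply/eq_in_map => X /IH.
Qed.

Lemma flatten_dlabels_drelabel f Fs :
  flatten (map dlabels (map (drelabel f) Fs)) = map f (flatten (map dlabels Fs)).
Proof.
rewrite map_flatten -!map_comp; congr flatten.
by apply/eq_map => X /=; rewrite dlabels_drelabel.
Qed.

Lemma flatten_blabels_brelabel f cs :
  flatten (map blabels (map (brelabel f) cs)) = map f (flatten (map blabels cs)).
Proof.
rewrite map_flatten -!map_comp; congr flatten.
by apply/eq_map => X /=; rewrite blabels_brelabel.
Qed.

Lemma drelabel_comp f g F : drelabel g (drelabel f F) = drelabel (g \o f) F.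
Proof.
elim/diamond_ind_in: F => [a|s t Fs IH] //=; rewrite -map_comp.
by congr DNode; apply/eq_in_map => X /IH.
Qed.

Lemma brelabel_comp f g T : brelabel g (brelabel f T) = brelabel (g \o f) T.
Proof.
elim/btree_ind_in: T => b cs IH /=; rewrite -!map_comp.
by congr BNode; apply/eq_in_map => X /IH.
Qed.

Lemma eq_in_drelabel f g F : {in dlabels F, f =1 g} -> drelabel f F = drelabel g F.
Proof.
elim/diamond_ind_in: F => [a|s t Fs IH] /= fg; first by rewrite fg ?mem_head.
rewrite !fg ?mem_head ?inE ?eqxx ?orbT //; congr DNode.
apply/eq_in_map => X XFs; apply: IH => // x xX.
by apply: fg; rewrite !inE (mem_flatten_map XFs xX) !orbT.
Qed.

Lemma eq_in_brelabel f g T : {in blabels T, f =1 g} -> brelabel f T = brelabel g T.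
Proof.
elim/btree_ind_in: T => b cs IH /= fg; congr BNode.
  by apply/eq_in_map => x xb; apply: fg; rewrite mem_cat xb.
apply/eq_in_map => X Xcs; apply: IH => // x xX.
by apply: fg; rewrite mem_cat (mem_flatten_map Xcs xX) orbT.
Qed.

Lemma drelabel_id F : drelabel id F = F.
Proof.
elim/diamond_ind_in: F => [a|s t Fs IH] //=; congr DNode.
by rewrite -[RHS]map_id; apply/eq_in_map => X /IH.
Qed.

Lemma brelabel_id T : brelabel id T = T.
Proof.
elim/btree_ind_in: T => b cs IH /=; rewrite map_id; congr BNode.
by rewrite -[RHS]map_id; apply/eq_in_map => X /IH.
Qed.

Lemma drelabelK_in f g F : {in dlabels F, cancel f g} -> drelabel g (drelabel f F) = F.
Proof. by move=> fK; rewrite drelabel_comp (eq_in_drelabel fK) drelabel_id. Qed.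

Lemma brelabelK_in f g T : {in blabels T, cancel f g} -> brelabel g (brelabel f T) = T.
Proof. by move=> fK; rewrite brelabel_comp (eq_in_brelabel fK) brelabel_id. Qed.

Lemma bcap1_brelabel f T : bcap1 (brelabel f T) = bcap1 T.
Proof.
elim/btree_ind_in: T => b cs IH /=; rewrite size_map -map_comp.
by congr (_ + sumn _); apply/eq_in_map => X /IH.
Qed.

Lemma bweight_brelabel (R : nzSemiRingType) (phi : nat -> R) f T :
  bweight phi (brelabel f T) = bweight phi T.
Proof.
elim/btree_ind_in: T => b cs IH /=; rewrite !size_map -map_comp.
by congr (_ * \prod_(G <- _) G)%R; apply/eq_in_map => X /IH.
Qed.

Lemma dwf_drelabel f F :
  {in dlabels F &, {homo f : x y / x < y}} -> dwf F -> dwf (drelabel f F).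
Proof.
elim/diamond_ind_in: F => [//|s t Fs IH] f_homo /= /and3P[st /allP Fs_between /allP Fs_wf].
have inF x : x \in flatten (map dlabels Fs) -> x \in s :: t :: flatten (map dlabels Fs).
  by rewrite !inE => ->; rewrite !orbT.
rewrite flatten_dlabels_drelabel f_homo ?mem_head ?inE ?eqxx ?orbT //=.
apply/andP; split.
  apply/allP => _ /mapP[x xC ->]; have /andP[sx xt] := Fs_between x xC.
  by rewrite !f_homo ?mem_head ?inE ?eqxx ?xC ?orbT.
apply/allP => _ /mapP[X XFs ->]; apply: IH; rewrite ?Fs_wf //.
by apply: sub_in2 f_homo => x xX; apply/inF/(mem_flatten_map XFs xX).
Qed.

Lemma bwf_brelabel f T :
  {in blabels T &, {homo f : x y / x < y}} -> bwf T -> bwf (brelabel f T).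
Proof.
elim/btree_ind_in: T => b cs IH f_homo /= /and5P[cap cap2 sorted_b b_below /allP cs_wf].
have inT x : x \in flatten (map blabels cs) -> x \in b ++ flatten (map blabels cs).
  by rewrite mem_cat => ->; rewrite orbT.
rewrite flatten_blabels_brelabel !size_map /nilp size_map cap cap2 /=; apply/and3P; split.
- apply: (homo_sorted_in (P := [in b ++ flatten (map blabels cs)])) sorted_b.
    by move=> x y xb yb; apply: f_homo.
  by apply/allP => x xb /=; rewrite mem_cat xb.
- apply/allP => _ /mapP[x xb ->]; apply/allP => _ /mapP[y yC ->].
  have xy : x < y by have /allP := allP b_below x xb; apply.
  by apply: f_homo xy; [rewrite mem_cat xb | apply: inT].
- apply/allP => _ /mapP[X Xcs ->]; apply: IH; rewrite ?cs_wf //.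
  by apply: sub_in2 f_homo => x xX; apply/inT/(mem_flatten_map Xcs xX).
Qed.

Lemma bcap1_Psi_fuel k T : bcap1 (Psi_fuel k T) = bcap1 T.
Proof.
elim: k T => [//|k IH] T /=; case: ifP => // _.
rewrite -(bcap1_brelabel (cycperm (sort leq (blabels T))) T).
case: (brelabel _ T) => b cs /=; rewrite -map_comp.
by congr (_ + sumn _); apply: eq_map => X /=; rewrite IH.
Qed.

Lemma bcap1_Phi F : bcap1 (Phi F) = dinner F.
Proof.
elim/diamond_ind_in: F => [//|s t Fs IH] /=; rewrite -map_comp.
by congr sumn; apply/eq_in_map => X /IH.
Qed.

Lemma bcap1_Mmap F : bcap1 (Mmap F) = dinner F.
Proof. by rewrite /Mmap /Psi bcap1_Psi_fuel bcap1_Phi. Qed.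

(* The recursive form of [Mmap]: at the root, the cycle of [Psi] sends the sink to the least
   inner label and every inner label one rank up. *)
Fixpoint diamond_to_btree (F : diamond) : btree :=
  match F with
  | DLeaf a => BNode [:: a] [::]
  | DNode s t Fs =>
      let M := sort leq (flatten (map dlabels Fs)) in
      BNode [:: s; head t M]
        (map (brelabel (transfer M (behead (rcons M t)))) (map diamond_to_btree Fs))
  end.

Fixpoint btree_to_diamond (T : btree) : diamond :=
  match T with
  | BNode [:: a] _ => DLeaf a
  | BNode (a :: b :: _) cs =>
      let S := sort leq (flatten (map blabels cs)) in
      DNode a (last b S)
        (map (drelabel (transfer S (belast b S))) (map btree_to_diamond cs))
  | BNode [::] _ => DLeaf 0
  end.

Lemma perm_blabels_diamond_to_btree F :
  uniq (dlabels F) -> perm_eq (blabels (diamond_to_btree F)) (dlabels F).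
Proof.
elim/diamond_ind_in: F => [//|s t Fs IH] /= /and3P[_ _ uC].
set C := flatten _; set M := sort leq C.
have sizeM : size M = size (behead (rcons M t)) by rewrite size_behead size_rcons.
have kids : perm_eq (flatten (map blabels (map diamond_to_btree Fs))) M.
  rewrite perm_sym perm_sort perm_sym -map_comp; apply: perm_flatten_map => X XFs.
  exact/IH/(uniq_flatten_map_mem uC).
rewrite flatten_blabels_brelabel.
apply: (@perm_trans _ (s :: rcons M t)).
  by rewrite rcons_head_behead !perm_cons; apply: perm_map_transfer; rewrite ?sort_uniq.
by rewrite perm_cons perm_rcons perm_cons perm_sort.
Qed.

Lemma perm_dlabels_btree_to_diamond T :
  bwf T -> uniq (blabels T) -> perm_eq (dlabels (btree_to_diamond T)) (blabels T).
Proof.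
elim/btree_ind_in: T => -[|a [|b [|? ?]]] cs IH //=; first by case: cs IH.
move=> /and4P[_ _ _ /allP cs_wf] /and3P[_ _ uC].
set C := flatten _; set S := sort leq C.
have sizeS : size S = size (belast b S) by rewrite size_belast.
have kids : perm_eq (flatten (map dlabels (map btree_to_diamond cs))) S.
  rewrite perm_sym perm_sort perm_sym -map_comp; apply: perm_flatten_map => X Xcs.
  exact: IH (cs_wf X Xcs) (uniq_flatten_map_mem uC Xcs).
rewrite flatten_dlabels_drelabel.
apply: (@perm_trans _ (a :: rcons (belast b S) (last b S))).
  rewrite perm_cons perm_sym perm_rcons perm_cons perm_sym.
  by apply: perm_map_transfer; rewrite ?sort_uniq.
by rewrite -lastI !perm_cons perm_sort.
Qed.

Lemma bwf_diamond_to_btree F : dwf F -> uniq (dlabels F) -> bwf (diamond_to_btree F).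
Proof.
elim/diamond_ind_in: F => [//|s t Fs IH] /and3P[st /allP between /allP Fs_wf] /and3P[_ _ uC].
rewrite [diamond_to_btree _]/=; set C := flatten _; set M := sort leq C.
set S0 := behead (rcons M t); set m := head t M.
have MC : M =i C by apply: perm_mem; rewrite perm_sort.
have sortedN : sorted ltn (m :: S0).
  rewrite -rcons_head_behead; apply: rcons_sorted; first exact: sort_ltn_sorted.
  by apply/allP => x; rewrite MC => /between /andP[].
have s_below : all (ltn s) (m :: S0).
  apply/allP => y; rewrite -rcons_head_behead mem_rcons inE => /predU1P[->//|].
  by rewrite MC => /between /andP[].
have sizeM : size M = size S0 by rewrite size_behead size_rcons.
have kids_sub X : X \in Fs -> {subset blabels (diamond_to_btree X) <= M}.
  move=> XFs y.
  rewrite (perm_mem (perm_blabels_diamond_to_btree (uniq_flatten_map_mem uC XFs))) MC.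
  exact: mem_flatten_map.
have labels_sub : {subset flatten (map blabels
    (map (brelabel (transfer M S0)) (map diamond_to_btree Fs))) <= S0}.
  move=> y; rewrite flatten_blabels_brelabel.
  move=> /mapP[x /flatten_mapP[_ /mapP[X XFs ->] xX] ->].
  exact: mem_transfer sizeM (kids_sub X XFs x xX).
rewrite /= implybT andbT.
have [s_m s_S0] : s < m /\ all (ltn s) S0 by apply/andP.
rewrite s_m andbT /= -andbA; apply/and3P; split.
- by apply/allP => y /labels_sub; apply: (allP s_S0).
- by apply/allP => y /labels_sub; apply: (allP (order_path_min ltn_trans sortedN)).
- apply/allP => _ /mapP[_ /mapP[X XFs ->] ->]; apply: bwf_brelabel.
    apply: sub_in2 (transfer_homo sizeM (sort_ltn_sorted uC) (path_sorted sortedN)).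
    exact: kids_sub.
  exact: IH (Fs_wf X XFs) (uniq_flatten_map_mem uC XFs).
Qed.
Lemma dwf_btree_to_diamond T : bwf T -> uniq (blabels T) -> dwf (btree_to_diamond T).
Proof.
elim/btree_ind_in: T => -[|a [|b [|? ?]]] cs IH //=.
move=> /and4P[_ /andP[ab _] /and3P[a_C b_C _] /allP cs_wf] /and3P[_ _ uC].
set C := flatten _; set S := sort leq C; set T2 := belast b S; set z := last b S.
have SC : S =i C by apply: perm_mem; rewrite perm_sort.
have sortedN : sorted ltn (rcons T2 z).
  rewrite -lastI /= path_min_sorted ?sort_ltn_sorted //.
  by apply/allP => y; rewrite SC; apply: (allP b_C).
have a_below : all (ltn a) (rcons T2 z).
  apply/allP => y; rewrite -lastI inE => /predU1P[->//|].
  by rewrite SC; apply: (allP a_C).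
have [lt_z sortedT2] : {in T2 & [:: z], forall x y, x < y} /\ sorted ltn T2.
  move: sortedN; rewrite (sorted_pairwise ltn_trans) -cats1 pairwise_cat.
  by case/and3P => /allrelP ? ? _; split; rewrite // (sorted_pairwise ltn_trans).
have sizeS : size S = size T2 by rewrite size_belast.
have kids_sub X : X \in cs -> {subset dlabels (btree_to_diamond X) <= S}.
  move=> Xcs y; have uX := uniq_flatten_map_mem uC Xcs.
  rewrite (perm_mem (perm_dlabels_btree_to_diamond (cs_wf X Xcs) uX)) SC.
  exact: mem_flatten_map.
have labels_sub : {subset flatten (map dlabels
    (map (drelabel (transfer S T2)) (map btree_to_diamond cs))) <= T2}.
  move=> y; rewrite flatten_dlabels_drelabel.
  move=> /mapP[x /flatten_mapP[_ /mapP[X Xcs ->] xX] ->].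
  exact: mem_transfer sizeS (kids_sub X Xcs x xX).
apply/and3P; split.
- by apply: (allP a_below); rewrite mem_rcons mem_head.
- apply/allP => y /labels_sub yT2; rewrite (lt_z y z yT2) ?mem_head // andbT.
  by apply: (allP a_below); rewrite mem_rcons inE yT2 orbT.
- apply/allP => _ /mapP[_ /mapP[X Xcs ->] ->]; apply: dwf_drelabel.
    apply: sub_in2 (transfer_homo sizeS (sort_ltn_sorted uC) sortedT2).
    exact: kids_sub.
  exact: IH (cs_wf X Xcs) (uniq_flatten_map_mem uC Xcs).
Qed.
Lemma diamond_to_btree_drelabel f F :
  uniq (dlabels F) -> {in dlabels F &, {homo f : x y / x < y}} ->
  diamond_to_btree (drelabel f F) = brelabel f (diamond_to_btree F).
Proof.
elim/diamond_ind_in: F => [//|s t Fs IH] /and3P[_ _ uC] f_homo.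
set C := flatten (map dlabels Fs); have C_sub : {subset C <= dlabels (DNode s t Fs)}.
  by move=> x xC; rewrite !inE xC !orbT.
have f_inj := incn_inj_in (leq_mono_in f_homo).
rewrite /= flatten_dlabels_drelabel -/C (sort_map_homo_ltn f_homo C_sub).
set M := sort leq C; set S0 := behead (rcons M t).
have MC : M =i C by apply: perm_mem; rewrite perm_sort.
have -> : head (f t) (map f M) = f (head t M) by case: (M).
rewrite -map_rcons behead_map -/S0 -!map_comp; congr BNode.
apply/eq_in_map => X XFs /=; have uX := uniq_flatten_map_mem uC XFs.
have X_sub : {subset dlabels X <= dlabels (DNode s t Fs)}.
  by move=> x xX; apply/C_sub/(mem_flatten_map XFs xX).
rewrite (IH X XFs uX (sub_in2 X_sub f_homo)) !brelabel_comp; apply: eq_in_brelabel => x /=.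
rewrite (perm_mem (perm_blabels_diamond_to_btree uX)) => xX.
rewrite transfer_map ?size_behead ?size_rcons ?MC ?(mem_flatten_map XFs xX) //.
by apply: sub_in2 f_inj => y; rewrite MC; apply: C_sub.
Qed.

Lemma btree_to_diamond_brelabel f T :
  bwf T -> uniq (blabels T) -> {in blabels T &, {homo f : x y / x < y}} ->
  btree_to_diamond (brelabel f T) = drelabel f (btree_to_diamond T).
Proof.
elim/btree_ind_in: T => -[|a [|b [|? ?]]] cs IH //.
move=> /= /and4P[_ _ _ /allP cs_wf] /and3P[_ _ uC] f_homo.
set C := flatten (map blabels cs).
have C_sub : {subset C <= blabels (BNode [:: a; b] cs)}.
  by move=> x xC; rewrite /= !inE xC !orbT.
have f_inj := incn_inj_in (leq_mono_in f_homo).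
rewrite flatten_blabels_brelabel -/C (sort_map_homo_ltn f_homo C_sub).
set S := sort leq C; set T2 := belast b S.
have SC : S =i C by apply: perm_mem; rewrite perm_sort.
rewrite last_map belast_map -/T2 -!map_comp; congr DNode.
apply/eq_in_map => X Xcs /=; have uX := uniq_flatten_map_mem uC Xcs.
have X_sub : {subset blabels X <= blabels (BNode [:: a; b] cs)}.
  by move=> x xX; apply/C_sub/(mem_flatten_map Xcs xX).
rewrite (IH X Xcs (cs_wf X Xcs) uX (sub_in2 X_sub f_homo)) !drelabel_comp.
apply: eq_in_drelabel => x /=.
rewrite (perm_mem (perm_dlabels_btree_to_diamond (cs_wf X Xcs) uX)) => xX.
rewrite transfer_map ?size_belast ?SC ?(mem_flatten_map Xcs xX) //.
by apply: sub_in2 f_inj => y; rewrite SC; apply: C_sub.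
Qed.

Lemma diamond_to_btreeK F : dwf F -> uniq (dlabels F) ->
  btree_to_diamond (diamond_to_btree F) = F.
Proof.
elim/diamond_ind_in: F => [//|s t Fs IH] /and3P[_ /allP between /allP Fs_wf].
move=> /and3P[_ _ uC].
set C := flatten (map dlabels Fs); set M := sort leq C.
set S0 := behead (rcons M t); set m := head t M.
have MC : M =i C by apply: perm_mem; rewrite perm_sort.
have uM : uniq M by rewrite sort_uniq.
have sortedN : sorted ltn (m :: S0).
  rewrite -rcons_head_behead; apply: rcons_sorted; first exact: sort_ltn_sorted.
  by apply/allP => x; rewrite MC => /between /andP[].
have sortedS0 := path_sorted sortedN.
have sizeM : size M = size S0 by rewrite size_behead size_rcons.
have kids_sub X : X \in Fs -> {subset blabels (diamond_to_btree X) <= M}.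
  move=> XFs y.
  rewrite (perm_mem (perm_blabels_diamond_to_btree (uniq_flatten_map_mem uC XFs))) MC.
  exact: mem_flatten_map.
have sort_kids : sort leq (flatten (map blabels
    (map (brelabel (transfer M S0)) (map diamond_to_btree Fs)))) = S0.
  apply: (sort_leq_id sortedS0); rewrite flatten_blabels_brelabel.
  apply: (perm_map_transfer sizeM uM); rewrite perm_sym perm_sort perm_sym -map_comp.
  apply: perm_flatten_map => X XFs.
  exact/perm_blabels_diamond_to_btree/(uniq_flatten_map_mem uC XFs).
rewrite /= sort_kids; have [-> ->] := belast_last_behead M t.
rewrite -[in RHS](map_id Fs) -!map_comp; congr DNode.
apply/eq_in_map => X XFs /=; have uX := uniq_flatten_map_mem uC XFs.
have up_homo := sub_in2 (kids_sub X XFs) (transfer_homo sizeM (sort_ltn_sorted uC) sortedS0).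
have wfX := Fs_wf X XFs.
have uGX : uniq (blabels (diamond_to_btree X)).
  by rewrite (perm_uniq (perm_blabels_diamond_to_btree uX)).
rewrite (btree_to_diamond_brelabel (bwf_diamond_to_btree wfX uX) uGX up_homo).
rewrite (IH X XFs wfX uX); apply: drelabelK_in => x xX.
apply: transferK; rewrite ?(sorted_uniq ltn_trans ltnn sortedS0) //.
by rewrite MC (mem_flatten_map XFs xX).
Qed.

Lemma btree_to_diamondK T : bwf T -> uniq (blabels T) ->
  diamond_to_btree (btree_to_diamond T) = T.
Proof.
elim/btree_ind_in: T => -[|a [|b [|? ?]]] cs IH //=; first by case: cs IH.
move=> /and4P[_ _ /and3P[_ b_C _] /allP cs_wf] /and3P[_ _ uC].
set C := flatten _; set S := sort leq C; set T2 := belast b S; set z := last b S.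
have SC : S =i C by apply: perm_mem; rewrite perm_sort.
have uS : uniq S by rewrite sort_uniq.
have sortedN : sorted ltn (rcons T2 z).
  rewrite -lastI /= path_min_sorted ?sort_ltn_sorted //.
  by apply/allP => y; rewrite SC; apply: (allP b_C).
have sortedT2 := subseq_sorted ltn_trans (subseq_rcons T2 z) sortedN.
have sizeS : size S = size T2 by rewrite size_belast.
have kids_sub X : X \in cs -> {subset dlabels (btree_to_diamond X) <= S}.
  move=> Xcs y; have uX := uniq_flatten_map_mem uC Xcs.
  rewrite (perm_mem (perm_dlabels_btree_to_diamond (cs_wf X Xcs) uX)) SC.
  exact: mem_flatten_map.
have sort_kids : sort leq (flatten (map dlabels
    (map (drelabel (transfer S T2)) (map btree_to_diamond cs)))) = T2.
  apply: (sort_leq_id sortedT2); rewrite flatten_dlabels_drelabel.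
  apply: (perm_map_transfer sizeS uS); rewrite perm_sym perm_sort perm_sym -map_comp.
  apply: perm_flatten_map => X Xcs.
  exact: perm_dlabels_btree_to_diamond (cs_wf X Xcs) (uniq_flatten_map_mem uC Xcs).
rewrite sort_kids; have [-> ->] := head_behead_belast b S.
rewrite -[in RHS](map_id cs) -!map_comp; congr BNode.
apply/eq_in_map => X Xcs /=; have uX := uniq_flatten_map_mem uC Xcs.
have wfX := cs_wf X Xcs.
have down_homo := sub_in2 (kids_sub X Xcs) (transfer_homo sizeS (sort_ltn_sorted uC) sortedT2).
have uHX : uniq (dlabels (btree_to_diamond X)).
  by rewrite (perm_uniq (perm_dlabels_btree_to_diamond wfX uX)).
rewrite (diamond_to_btree_drelabel uHX down_homo) (IH X Xcs wfX uX).
apply: brelabelK_in => x xX.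
apply: transferK; rewrite ?(sorted_uniq ltn_trans ltnn sortedT2) //.
by rewrite SC (mem_flatten_map Xcs xX).
Qed.

Lemma bweight_diamond_to_btree (R : nzSemiRingType) (phi : nat -> R) F :
  bweight phi (diamond_to_btree F) = dweight phi F.
Proof.
elim/diamond_ind_in: F => [a|s t Fs IH] /=; first by rewrite big_nil mulr1.
rewrite !size_map -!map_comp; congr (_ * \prod_(G <- _) G)%R.
by apply/eq_in_map => X /IH /= <-; apply: bweight_brelabel.
Qed.

Lemma bcap1_diamond_to_btree F : bcap1 (diamond_to_btree F) = dinner F.
Proof.
elim/diamond_ind_in: F => [//|s t Fs IH] /=; rewrite -!map_comp.
by congr sumn; apply/eq_in_map => X /IH /= <-; apply: bcap1_brelabel.
Qed.

Local Open Scope classical_set_scope.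

Lemma set_bij_diamond_to_btree n (P : diamond -> Prop) (Q : btree -> Prop) :
  (forall F, Q (diamond_to_btree F) <-> P F) ->
  set_bij (diamonds_of_size n `&` P) (btrees_of_size n `&` Q) diamond_to_btree.
Proof.
move=> QP; split.
- move=> F [[/andP[uF wfF] labF] PF]; have perm_lab := perm_blabels_diamond_to_btree uF.
  split; last exact/QP.
  split; last exact: perm_trans perm_lab labF.
  by rewrite /is_btree (perm_uniq perm_lab) uF bwf_diamond_to_btree.
- move=> F1 F2 /set_mem[[/andP[u1 wf1] _] _] /set_mem[[/andP[u2 wf2] _] _] eqG.
  by rewrite -(diamond_to_btreeK wf1 u1) eqG diamond_to_btreeK.
- move=> T [[/andP[uT wfT] labT] QT]; have perm_lab := perm_dlabels_btree_to_diamond wfT uT.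
  exists (btree_to_diamond T); last exact: btree_to_diamondK.
  split; last by apply/QP; rewrite btree_to_diamondK.
  split; last exact: perm_trans perm_lab labT.
  by rewrite /is_diamond (perm_uniq perm_lab) uT dwf_btree_to_diamond.
Qed.

Local Open Scope ring_scope.

Lemma prob_inner_eq_prob_cap1 (R : realFieldType) (phi : nat -> R) n k :
  prob_inner phi n k = prob_cap1 phi n k.
Proof.
rewrite /prob_inner /prob_cap1.
set inner_k := diamonds_of_size n `&` [set F | dinner F = k].
rewrite (reindex_fsbig diamond_to_btree inner_k); last first.
  by apply: set_bij_diamond_to_btree => F /=; rewrite bcap1_diamond_to_btree.
rewrite (reindex_fsbig diamond_to_btree (diamonds_of_size n)); last first.
  rewrite -[diamonds_of_size n]setIT -[btrees_of_size n]setIT.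
  exact: set_bij_diamond_to_btree.
by congr (_ / _); apply: eq_fsbigr => F _; rewrite bweight_diamond_to_btree.
Qed.

Theorem mainTheorem3 (R : realFieldType) (phi : nat -> R)
  (phi_ge0 : forall k, 0 <= phi k) (phi0_gt0 : 0 < phi 0%N) :
  (forall F : diamond, is_diamond F -> dinner F = bcap1 (Mmap F)) /\
  (forall n k : nat, (1 <= n)%N -> prob_inner phi n k = prob_cap1 phi n k).
Proof.
(* The bijection matches numerators and denominators term by term. *)
split=> [F _ | n k _]; first by rewrite bcap1_Mmap.
exact: prob_inner_eq_prob_cap1.
Qed.
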